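(* Let $(V,\cdot,\psi)$ be a Hom-left-symmetric algebra. Then $(V,\psi,L)$ is a weakly involutive representation of the commutator Hom-Lie algebra $(\mathfrak g(V),[\cdot,\cdot]_V,\psi)$ if and only if $u\cdot v=\psi^2(u)\cdot v$ for all $u,v\in V$. Under this condition, $\psi^2$ is an $\mathcal O$-operator of $(\mathfrak g(V),[\cdot,\cdot]_V,\psi)$ associated to $(V,\psi,L)$.
   Context: A Hom-left-symmetric algebra $(V,\cdot,\psi)$: a vector space with bilinear product $\cdot$ and linear map $\psi$ with $\psi(u\cdot v)=\psi(u)\cdot\psi(v)$ and $(u\cdot v)\cdot\psi(w)-\psi(u)\cdot(v\cdot w)=(v\cdot u)\cdot\psi(w)-\psi(v)\cdot(u\cdot w)$. The commutator Hom-Lie algebra $\mathfrak g(V)$ is $V$ with $[u,v]_V=u\cdot v-v\cdot u$ and twisting map $\psi$; $L_uv=u\cdot v$, and $(V,\psi,L)$ is a representation of $\mathfrak g(V)$. A representation $(W,\beta,\rho)$ of a Hom-Lie algebra $(\mathfrak g,[\cdot,\cdot],\phi)$ ($\rho(\phi(x))\beta=\beta\rho(x)$, $\rho([x,y])\beta=\rho(\phi(x))\rho(y)-\rho(\phi(y))\rho(x)$) is weakly involutive if $\rho(\phi^2(x))=\rho(x)$. An $\mathcal O$-operator associated to $(W,\beta,\rho)$ is a linear $T:W\to\mathfrak g$ with $T\beta=\phi T$ and $[T(u),T(v)]=T(\rho(T(u))v-\rho(T(v))u)$. *)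

From HB Require Import structures.
From mathcomp Require Import all_boot all_algebra.
Set Implicit Arguments. Unset Strict Implicit. Unset Printing Implicit Defensive.
Import GRing.Theory.
Local Open Scope ring_scope.

Definition is_lin (K : fieldType) (V W : lmodType K) (f : V -> W) : Prop :=
  forall (a : K) (x y : V), f (a *: x + y) = a *: f x + f y.

Definition is_bilin (K : fieldType) (V W U : lmodType K) (f : V -> W -> U) : Prop :=
  (forall w, is_lin (fun v => f v w)) /\ (forall v, is_lin (f v)).

Definition HomLeftSymmetric (K : fieldType) (V : lmodType K)
  (mul : V -> V -> V) (psi : V -> V) : Prop :=
  [/\ is_bilin mul, is_lin psi,
      (forall u v, psi (mul u v) = mul (psi u) (psi v)) &
      (forall u v w,
         mul (mul u v) (psi w) - mul (psi u) (mul v w)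
         = mul (mul v u) (psi w) - mul (psi v) (mul u w))].

Definition commutator (K : fieldType) (V : lmodType K) (mul : V -> V -> V) :
  V -> V -> V := fun u v => mul u v - mul v u.

Definition Lmul (K : fieldType) (V : lmodType K) (mul : V -> V -> V) :
  V -> V -> V := fun u v => mul u v.

Definition HomLieRep (K : fieldType) (g W : lmodType K)
  (br : g -> g -> g) (phi : g -> g) (beta : W -> W) (rho : g -> W -> W) : Prop :=
  [/\ is_lin beta,
      (forall (a : K) x y w, rho (a *: x + y) w = a *: rho x w + rho y w), (forall x, is_lin (rho x)),
      (forall x w, rho (phi x) (beta w) = beta (rho x w)) &
      (forall x y w, rho (br x y) (beta w)
                     = rho (phi x) (rho y w) - rho (phi y) (rho x w))].

Definition weakly_involutive (K : fieldType) (g W : lmodType K)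
  (phi : g -> g) (rho : g -> W -> W) : Prop :=
  forall x w, rho (phi (phi x)) w = rho x w.

Definition O_operator (K : fieldType) (g W : lmodType K)
  (br : g -> g -> g) (phi : g -> g) (beta : W -> W) (rho : g -> W -> W)
  (T : W -> g) : Prop :=
  [/\ is_lin T, (forall w, T (beta w) = phi (T w)) &
      (forall u v, br (T u) (T v) = T (rho (T u) v - rho (T v) u))].

(* The Hom-left-symmetric identity, read as
   [(u.v - v.u).psi(w) = psi(u).(v.w) - psi(v).(u.w)], together with the
   multiplicativity of psi, says that (V, psi, L) is always a representation
   of g(V), and weak involutivity of L is literally the identity
   [u.v = psi^2(u).v].  Under that identity psi^2 is an O-operator because it
   is a linear algebra endomorphism commuting with psi whose left
   multiplications agree with those of the identity map:
   [psi^2(u.v - v.u) = psi^2(u).psi^2(v) - psi^2(v).psi^2(u)]. *)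
From mathcomp Require Import all_boot all_algebra.

Set Implicit Arguments.
Unset Strict Implicit.
Unset Printing Implicit Defensive.

Local Open Scope ring_scope.
Import GRing.Theory.

Lemma subr_swap (V : zmodType) (a b c d : V) : a - b = c - d -> a - c = b - d.
Proof.
move=> /(canRL (subrK b)) ->.
by rewrite addrAC [c - d - c]addrAC subrr add0r addrC.
Qed.

Section LinearMaps.

Variables (K : fieldType) (V W U : lmodType K).

Lemma is_lin0 (f : V -> W) : is_lin f -> f 0 = 0.
Proof.
move=> f_lin; have := f_lin 1 0 0; rewrite !scale1r addr0 => f00.
by apply: (addrI (f 0)); rewrite addr0 -f00.
Qed.

Lemma is_linB (f : V -> W) x y : is_lin f -> f (x - y) = f x - f y.
Proof.
move=> f_lin; have fN : f (- y) = - f y.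
  by rewrite -scaleN1r -[_ *: y]addr0 f_lin is_lin0 // addr0 scaleN1r.
by rewrite -fN -[x]scale1r f_lin !scale1r.
Qed.

Lemma is_lin_comp (g : W -> U) (f : V -> W) :
  is_lin g -> is_lin f -> is_lin (g \o f).
Proof. by move=> g_lin f_lin a x y; rewrite /= f_lin g_lin. Qed.

End LinearMaps.

Section HomLeftSymmetricAlgebra.

Variables (K : fieldType) (V : lmodType K) (mul : V -> V -> V) (psi : V -> V).

Lemma HomLeftSymmetric_Lmul_rep :
  HomLeftSymmetric mul psi -> HomLieRep (commutator mul) psi psi (Lmul mul).
Proof.
case=> [[mul_linl mul_linr] psi_lin psiM hls]; split.
- exact: psi_lin.
- by move=> a x y w; apply: mul_linl.
- exact: mul_linr.
- by move=> x w; rewrite /Lmul psiM.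
- move=> x y w; rewrite /Lmul /commutator (is_linB _ _ (mul_linl _)).
  exact/subr_swap/hls.
Qed.

Lemma weakly_involutive_LmulP :
  weakly_involutive psi (Lmul mul) <-> forall u v, mul u v = mul (psi (psi u)) v.
Proof.
by rewrite /weakly_involutive /Lmul; split=> eq_mul u v; exact: esym (eq_mul u v).
Qed.

Lemma O_operator_of_Lmul_invariant_endomorphism (T : V -> V) :
  is_lin T ->
  (forall u v, T (mul u v) = mul (T u) (T v)) ->
  (forall u, T (psi u) = psi (T u)) ->
  (forall u v, mul (T u) v = mul u v) ->
  O_operator (commutator mul) psi psi (Lmul mul) T.
Proof.
move=> T_lin TM T_psi LT; split=> // u v.
by rewrite /commutator /Lmul is_linB // !TM !LT.
Qed.

End HomLeftSymmetricAlgebra.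

Theorem corollary5p6 (K : fieldType) (V : lmodType K)
  (mul : V -> V -> V) (psi : V -> V) :
  HomLeftSymmetric mul psi ->
  ((HomLieRep (commutator mul) psi psi (Lmul mul)
    /\ weakly_involutive psi (Lmul mul))
   <-> (forall u v : V, mul u v = mul (psi (psi u)) v))
  /\ ((forall u v : V, mul u v = mul (psi (psi u)) v) ->
      O_operator (commutator mul) psi psi (Lmul mul) (fun u => psi (psi u))).
Proof.
move=> hls; have [_ psi_lin psiM _] := hls.
split; first split.
- by case=> _ /weakly_involutive_LmulP.
- move=> /weakly_involutive_LmulP winv.
  by split; first exact: HomLeftSymmetric_Lmul_rep.
- move=> eq_mul; apply: O_operator_of_Lmul_invariant_endomorphism.
  + exact: is_lin_comp.
  + by move=> u v; rewrite !psiM.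
  + by [].
  + by move=> u v; rewrite -eq_mul.
Qed.
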